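(* (i) The unimodal spi-logic $\mathsf{SPi}+\{\iota_{fun}\}$ is complex, and hence complete. On the other hand, the following spi-logics are incomplete: (ii) $\mathsf{SPi}+\{\Diamond p\to p,\ \iota_{fun}\}$; (iii) $\mathsf{SPi}+\{\iota_{refl},\iota_{fun}\}=\mathsf{SPi}+\{\iota_{refl},\iota_{eucl},\iota_{fun}\}$; (iv) $\mathsf{SPi}+\{\iota_{refl},\iota_{trans},\iota_{fun}\}=\mathsf{SPi}+\{\iota_{refl},\iota_{trans},\iota_{sym},\iota_{fun}\}=\mathsf{SPi}+\{\iota_{refl},\iota_{trans},\iota_{eucl},\iota_{fun}\}$; (v) $\mathsf{SPi}+\{\iota_{sym},\iota_{fun}\}$.
   Context: Unimodal setting: one diamond $\Diamond$. Sp-formulas: built from propositional variables and $\top$ by $\wedge$ and $\Diamond$; sp-implications $\sigma\to\tau$. A SLO is an algebra $(A,\wedge,\top,\Diamond)$ with $(A,\wedge,\top)$ a meet-semilattice with top and $\Diamond$ monotone; it validates $\sigma\to\tau$ if $\sigma[\mathfrak a]\le\tau[\mathfrak a]$ for all valuations. Frames $(W,R)$ with standard Kripke semantics. $\mathsf{SPi}+\Sigma$ is the set of sp-implications valid in every SLO validating $\Sigma$; it is complete if it equals the set of sp-implications valid in every frame validating $\Sigma$, incomplete otherwise. For a frame $\mathfrak F=(W,R)$, $\mathfrak F^\star=(2^W,\cap,W,\Diamond^+)$ with $\Diamond^+X=\{w\mid\exists v\in X,(w,v)\in R\}$; a spi-logic $L$ is complex if every SLO validating $L$ embeds (injectively,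 preserving $\wedge,\top,\Diamond$) into $\mathfrak F^\star$ for some frame $\mathfrak F$ validating $L$. Notation: $\iota_{refl}=(p\to\Diamond p)$, $\iota_{trans}=(\Diamond\Diamond p\to\Diamond p)$, $\iota_{sym}=(q\wedge\Diamond p\to\Diamond(p\wedge\Diamond q))$, $\iota_{eucl}=(\Diamond p\wedge\Diamond q\to\Diamond(p\wedge\Diamond q))$, $\iota_{fun}=(\Diamond p\wedge\Diamond q\to\Diamond(p\wedge q))$. *)

From Stdlib Require Import List.
Import ListNotations.

Inductive spf : Type :=
| SVar : nat -> spf
| STop : spf
| SAnd : spf -> spf -> spf
| SDia : spf -> spf.

(** Sp-implication sigma -> tau. *)
Definition spi : Type := (spf * spf)%type.

Record SLO : Type := {
  car :> Type;
  smeet : car -> car -> car;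
  stop : car;
  sdia : car -> car;
  smeet_assoc : forall a b c, smeet a (smeet b c) = smeet (smeet a b) c;
  smeet_comm : forall a b, smeet a b = smeet b a;
  smeet_idem : forall a, smeet a a = a;
  smeet_top : forall a, smeet a stop = a;
  sdia_mono : forall a b, smeet a b = a -> smeet (sdia a) (sdia b) = sdia a
}.

Definition sle (A : SLO) (a b : A) : Prop := smeet A a b = a.

Fixpoint sinterp (A : SLO) (v : nat -> A) (f : spf) : A :=
  match f with
  | SVar n => v n
  | STop => stop A
  | SAnd f g => smeet A (sinterp A v f) (sinterp A v g)
  | SDia f => sdia A (sinterp A v f)
  end.

Definition slo_valid (A : SLO) (i : spi) : Prop :=
  forall v : nat -> A, sle A (sinterp A v (fst i)) (sinterp A v (snd i)).

Definition slo_validates (A : SLO) (L : spi -> Prop) : Prop :=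
  forall i, L i -> slo_valid A i.

Definition SPi (Sigma : list spi) (i : spi) : Prop :=
  forall A : SLO, slo_validates A (fun j => In j Sigma) -> slo_valid A i.

Record frame : Type := { world : Type; rel : world -> world -> Prop }.

Fixpoint ktrue (F : frame) (V : nat -> world F -> Prop) (w : world F) (f : spf)
  : Prop :=
  match f with
  | SVar n => V n w
  | STop => True
  | SAnd f g => ktrue F V w f /\ ktrue F V w g
  | SDia f => exists u, rel F w u /\ ktrue F V u f
  end.

Definition frame_valid (F : frame) (i : spi) : Prop :=
  forall (V : nat -> world F -> Prop) (w : world F),
    ktrue F V w (fst i) -> ktrue F V w (snd i).

Definition frame_validates (F : frame) (L : spi -> Prop) : Prop :=
  forall i, L i -> frame_valid F i.

Definition complete (Sigma : list spi) : Prop :=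
  forall i, SPi Sigma i <->
    (forall F : frame, frame_validates F (fun j => In j Sigma) -> frame_valid F i).

Definition incomplete (Sigma : list spi) : Prop := ~ complete Sigma.

(** Complex algebra F* = (2^W, cap, W, <>^+) and embeddings into it. *)
Definition dia_plus (F : frame) (X : world F -> Prop) : world F -> Prop :=
  fun w => exists v, X v /\ rel F w v.

Definition embeds_into_complex (A : SLO) (F : frame) : Prop :=
  exists e : A -> (world F -> Prop),
    (forall a b, e a = e b -> a = b) /\
    (forall a b, e (smeet A a b) = (fun w => e a w /\ e b w)) /\
    (e (stop A) = (fun _ => True)) /\
    (forall a, e (sdia A a) = dia_plus F (e a)).

Definition complex (Sigma : list spi) : Prop :=
  forall A : SLO, slo_validates A (SPi Sigma) ->
    exists F : frame, frame_validates F (SPi Sigma) /\ embeds_into_complex A F.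

Definition same_logic (S1 S2 : list spi) : Prop :=
  forall i, SPi S1 i <-> SPi S2 i.

Definition p_ := SVar 0.
Definition q_ := SVar 1.
Definition i_refl : spi := (p_, SDia p_).
Definition i_trans : spi := (SDia (SDia p_), SDia p_).
Definition i_sym : spi := (SAnd q_ (SDia p_), SDia (SAnd p_ (SDia q_))).
Definition i_eucl : spi := (SAnd (SDia p_) (SDia q_), SDia (SAnd p_ (SDia q_))).
Definition i_fun : spi := (SAnd (SDia p_) (SDia q_), SDia (SAnd p_ q_)).
Definition i_diaT : spi := (SDia p_, p_).

From Stdlib Require Import List Bool.
Import ListNotations.
From Stdlib Require Import FunctionalExtensionality PropExtensionality ProofIrrelevance.

(* (i) Take as worlds the filters of an SLO A validating ι_fun, with x R y iff
   ◇⊤ ∈ x and y = ◇⁻¹[x].  By ι_fun, ◇⁻¹[x] is closed under meets, so it is a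
   filter; R is a partial function, hence the frame validates ι_fun, and
   a ↦ {x | a ∈ x} embeds A into its complex algebra (principal filters separate
   points).  Embeddings reflect validity, so complexity gives completeness.
   (ii)–(v) On frames ι_fun says that R is a partial function; combined with
   reflexivity this forces R ⊆ id, so ◇p → p holds, with symmetry ◇◇p → p holds,
   and with ◇p → p the implication p ∧ ◇⊤ → ◇p holds.  None of these is derivable:
   booleans with ◇ constantly ⊤, resp. the chain 0 < m < 1 with ◇1 = 1 and
   ◇0 = ◇m = 0, validate the axioms but refute them.  The equalities of logics
   hold because ι_eucl and ι_sym follow algebraically from ι_refl and ι_fun. *)

Section SemilatticeOrder.
Variable A : SLO.

Lemma sle_refl (a : A) : sle A a a.
Proof. apply smeet_idem. Qed.

Lemma sle_trans (a b c : A) : sle A a b -> sle A b c -> sle A a c.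
Proof.
  unfold sle; intros Hab Hbc. rewrite <- Hab, <- smeet_assoc, Hbc. reflexivity.
Qed.

Lemma sle_meet_l (a b : A) : sle A (smeet A a b) a.
Proof.
  unfold sle. rewrite (smeet_comm A a b), <- smeet_assoc, smeet_idem. reflexivity.
Qed.

Lemma sle_meet_r (a b : A) : sle A (smeet A a b) b.
Proof. unfold sle. rewrite <- smeet_assoc, smeet_idem. reflexivity. Qed.

Lemma sle_meet_glb (a b c : A) : sle A c a -> sle A c b -> sle A c (smeet A a b).
Proof. unfold sle; intros Hca Hcb. rewrite smeet_assoc, Hca, Hcb. reflexivity. Qed.

Lemma sle_antisym (a b : A) : sle A a b -> sle A b a -> a = b.
Proof. unfold sle; intros Hab Hba. rewrite <- Hab, smeet_comm. exact Hba. Qed.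

Lemma sle_top (a : A) : sle A a (stop A).
Proof. apply smeet_top. Qed.

End SemilatticeOrder.

Definition val2 (A : SLO) (a b : A) : nat -> A :=
  fun n => match n with 0 => a | _ => b end.

Lemma slo_valid_refl (A : SLO) :
  slo_valid A i_refl -> forall a : A, sle A a (sdia A a).
Proof. intros H a. exact (H (val2 A a a)). Qed.

Lemma slo_valid_fun (A : SLO) : slo_valid A i_fun ->
  forall a b : A, sle A (smeet A (sdia A a) (sdia A b)) (sdia A (smeet A a b)).
Proof. intros H a b. exact (H (val2 A a b)). Qed.

Section ReflFunConsequences.
Variable A : SLO.
Hypothesis refl : forall a : A, sle A a (sdia A a).
Hypothesis fun_ : forall a b : A,
  sle A (smeet A (sdia A a) (sdia A b)) (sdia A (smeet A a b)).

Lemma slo_valid_eucl_of_refl_fun : slo_valid A i_eucl.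
Proof.
  intros v; simpl.
  eapply sle_trans; [apply fun_|]. apply sdia_mono, sle_meet_glb.
  - apply sle_meet_l.
  - eapply sle_trans; [apply sle_meet_r | apply refl].
Qed.

Lemma slo_valid_sym_of_refl_fun : slo_valid A i_sym.
Proof.
  intros v; simpl.
  eapply sle_trans; [|apply fun_]. apply sle_meet_glb.
  - apply sle_meet_r.
  - eapply sle_trans; [apply sle_meet_l|].
    eapply sle_trans; [apply refl | apply sdia_mono, refl].
Qed.

End ReflFunConsequences.

Lemma same_logic_add_derivable (S1 S2 : list spi) (x : spi) :
  incl S1 S2 -> incl S2 (x :: S1) ->
  (forall A, slo_validates A (fun j => In j S1) -> slo_valid A x) ->
  same_logic S1 S2.
Proof.
  intros H12 H21 Hx i; split; intros Hi A HA; apply Hi; intros j Hj.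
  - apply HA, H12, Hj.
  - destruct (H21 j Hj) as [<- | Hj1]; [apply Hx, HA | apply HA, Hj1].
Qed.

Lemma pred_ext {W : Type} (X Y : W -> Prop) : (forall w, X w <-> Y w) -> X = Y.
Proof.
  intro H. apply functional_extensionality; intro w.
  apply propositional_extensionality, H.
Qed.

Lemma pred_meet_eq_iff {W : Type} (X Y : W -> Prop) :
  (fun w => X w /\ Y w) = X <-> (forall w, X w -> Y w).
Proof.
  split.
  - intros H w Hw. rewrite <- H in Hw. exact (proj2 Hw).
  - intros H. apply pred_ext. firstorder.
Qed.

Section ComplexAlgebra.
Variable F : frame.

Definition complex_slo : SLO := {|
  car := world F -> Prop;
  smeet := fun X Y w => X w /\ Y w;
  stop := fun _ => True;
  sdia := dia_plus F;
  smeet_assoc := ltac:(intros; apply pred_ext; tauto);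
  smeet_comm := ltac:(intros; apply pred_ext; tauto);
  smeet_idem := ltac:(intros; apply pred_ext; tauto);
  smeet_top := ltac:(intros; apply pred_ext; tauto);
  sdia_mono := ltac:(intros X Y; rewrite !pred_meet_eq_iff;
                     intros H w [v [Hv Hr]]; exists v; auto)
|}.

Lemma ktrue_sinterp V w f : ktrue F V w f <-> sinterp complex_slo V f w.
Proof.
  revert w; induction f as [n| |f IHf g IHg|f IHf]; intro w; simpl; try tauto.
  - rewrite IHf, IHg. tauto.
  - unfold dia_plus. split; intros [u [Hu Hf]]; exists u; firstorder.
Qed.

Lemma frame_valid_iff_complex i : frame_valid F i <-> slo_valid complex_slo i.
Proof.
  unfold frame_valid, slo_valid, sle. split.
  - intros H v. apply pred_meet_eq_iff. intros w Hw.
    apply ktrue_sinterp, H, ktrue_sinterp, Hw.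
  - intros H V w Hw. apply ktrue_sinterp.
    apply (proj1 (pred_meet_eq_iff _ _) (H V)), ktrue_sinterp, Hw.
Qed.

End ComplexAlgebra.

Lemma SPi_axiom (S : list spi) j : In j S -> SPi S j.
Proof. intros Hj A HA. apply HA, Hj. Qed.

Lemma slo_validates_SPi (A : SLO) (S : list spi) :
  slo_validates A (fun j => In j S) -> slo_validates A (SPi S).
Proof. intros HA j Hj. apply Hj, HA. Qed.

Lemma frame_validates_SPi (F : frame) (S : list spi) :
  frame_validates F (fun j => In j S) -> frame_validates F (SPi S).
Proof.
  intros HF i Hi. apply frame_valid_iff_complex, Hi.
  intros j Hj. apply frame_valid_iff_complex, HF, Hj.
Qed.

Lemma sinterp_embedding (A : SLO) (F : frame) (e : A -> (world F -> Prop)) :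
  (forall a b, e (smeet A a b) = (fun w => e a w /\ e b w)) ->
  e (stop A) = (fun _ => True) ->
  (forall a, e (sdia A a) = dia_plus F (e a)) ->
  forall v f, e (sinterp A v f) = sinterp (complex_slo F) (fun n => e (v n)) f.
Proof.
  intros Hmeet Htop Hdia v f.
  induction f as [n| |f IHf g IHg|f IHf]; simpl; auto.
  - rewrite Hmeet, IHf, IHg. reflexivity.
  - rewrite Hdia, IHf. reflexivity.
Qed.

Lemma slo_valid_of_embedding (A : SLO) (F : frame) i :
  embeds_into_complex A F -> frame_valid F i -> slo_valid A i.
Proof.
  intros [e [Hinj [Hmeet [Htop Hdia]]]] HF v.
  apply frame_valid_iff_complex in HF. apply Hinj.
  rewrite Hmeet, !(sinterp_embedding A F e Hmeet Htop Hdia).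
  exact (HF (fun n => e (v n))).
Qed.

Lemma complete_of_complex (S : list spi) : complex S -> complete S.
Proof.
  intros Hc i. split.
  - intros Hi F HF. exact (frame_validates_SPi F S HF i Hi).
  - intros Hfr A HA.
    destruct (Hc A (slo_validates_SPi A S HA)) as [F [HF He]].
    apply (slo_valid_of_embedding A F i He).
    apply Hfr. intros j Hj. apply HF, SPi_axiom, Hj.
Qed.

Definition i_serialT : spi := (SAnd p_ (SDia STop), SDia p_).
Definition i_diadiaT : spi := (SDia (SDia p_), p_).

Definition partial_function {W : Type} (R : W -> W -> Prop) : Prop :=
  forall w u u', R w u -> R w u' -> u = u'.

Lemma frame_valid_fun_iff (F : frame) :
  frame_valid F i_fun <-> partial_function (rel F).
Proof.
  unfold frame_valid, i_fun, p_, q_; simpl. split.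
  - intros H w u u' Hu Hu'.
    destruct (H (fun n x => match n with 0 => x = u | _ => x = u' end) w
                (conj (ex_intro _ u (conj Hu eq_refl))
                      (ex_intro _ u' (conj Hu' eq_refl))))
      as [t [_ [-> ->]]].
    reflexivity.
  - intros Hpf V w [[u [Hu Hp]] [u' [Hu' Hq]]].
    rewrite <- (Hpf w u u' Hu Hu') in Hq. eauto.
Qed.

Lemma frame_valid_refl_reflexive (F : frame) :
  frame_valid F i_refl -> forall w, rel F w w.
Proof.
  intros H w. destruct (H (fun _ x => x = w) w eq_refl) as [u [Hu ->]]. exact Hu.
Qed.

Lemma frame_valid_sym_symmetric (F : frame) :
  frame_valid F i_sym -> forall w u, rel F w u -> rel F u w.
Proof.
  intros H w u Hwu. unfold frame_valid, i_sym, p_, q_ in H; simpl in H.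
  destruct (H (fun n x => match n with 0 => x = u | _ => x = w end) w
              (conj eq_refl (ex_intro _ u (conj Hwu eq_refl))))
    as [t [_ [-> [s [Hus ->]]]]].
  exact Hus.
Qed.

Lemma frame_valid_diaT_coreflexive (F : frame) :
  frame_valid F i_diaT -> forall w u, rel F w u -> u = w.
Proof.
  intros H w u Hwu. symmetry. apply (H (fun _ x => x = u) w). simpl. eauto.
Qed.

Lemma refl_fun_frame_valid_diaT (F : frame) :
  frame_valid F i_refl -> frame_valid F i_fun -> frame_valid F i_diaT.
Proof.
  intros Hrefl Hfun V w [u [Hwu Hu]].
  apply frame_valid_fun_iff in Hfun.
  rewrite (Hfun w w u (frame_valid_refl_reflexive F Hrefl w) Hwu). exact Hu.
Qed.

Lemma sym_fun_frame_valid_diadiaT (F : frame) :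
  frame_valid F i_sym -> frame_valid F i_fun -> frame_valid F i_diadiaT.
Proof.
  intros Hsym Hfun V w [u [Hwu [t [Hut Ht]]]].
  apply frame_valid_fun_iff in Hfun.
  rewrite (Hfun u t w Hut (frame_valid_sym_symmetric F Hsym w u Hwu)) in Ht.
  exact Ht.
Qed.

Lemma diaT_frame_valid_serialT (F : frame) :
  frame_valid F i_diaT -> frame_valid F i_serialT.
Proof.
  intros HdiaT V w [Hw [u [Hwu _]]].
  pose proof (frame_valid_diaT_coreflexive F HdiaT w u Hwu) as ->.
  exists w. split; assumption.
Qed.

Section FilterFrame.
Variable A : SLO.
Hypothesis fun_ : forall a b : A,
  sle A (smeet A (sdia A a) (sdia A b)) (sdia A (smeet A a b)).

Record filter : Type := {
  fmem : A -> Prop;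
  filter_top : fmem (stop A);
  filter_meet : forall a b, fmem a -> fmem b -> fmem (smeet A a b);
  filter_up : forall a b, sle A a b -> fmem a -> fmem b
}.

Lemma filter_ext (x y : filter) : (forall a, fmem x a <-> fmem y a) -> x = y.
Proof.
  destruct x as [x xt xm xu], y as [y yt ym yu]; simpl. intro H.
  assert (x = y) as <- by (apply pred_ext, H).
  f_equal; apply proof_irrelevance.
Qed.

Definition principal_filter (a : A) : filter := {|
  fmem := fun c => sle A a c;
  filter_top := sle_top A a;
  filter_meet := fun b c => sle_meet_glb A b c a;
  filter_up := fun b c Hbc Hab => sle_trans A a b c Hab Hbc
|}.

Definition filter_rel (x y : filter) : Prop :=
  fmem x (sdia A (stop A)) /\ forall a, fmem y a <-> fmem x (sdia A a).

Definition filter_frame : frame := {| world := filter; rel := filter_rel |}.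

Lemma filter_rel_partial_function : partial_function filter_rel.
Proof.
  intros x y y' [_ Hy] [_ Hy']. apply filter_ext. intro a. rewrite Hy, Hy'. tauto.
Qed.

Definition dia_preimage (x : filter) (Hx : fmem x (sdia A (stop A))) : filter := {|
  fmem := fun c => fmem x (sdia A c);
  filter_top := Hx;
  filter_meet := fun b c Hb Hc =>
    filter_up x _ _ (fun_ b c) (filter_meet x _ _ Hb Hc);
  filter_up := fun b c Hbc => filter_up x _ _ (sdia_mono A b c Hbc)
|}.

Lemma filter_frame_embedding : embeds_into_complex A filter_frame.
Proof.
  exists (fun a (x : filter) => fmem x a). split; [|split; [|split]].
  - intros a b H.
    pose proof (f_equal (fun X => X (principal_filter a)) H) as Ha.
    pose proof (f_equal (fun X => X (principal_filter b)) H) as Hb.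
    simpl in Ha, Hb. apply sle_antisym.
    + rewrite <- Ha. apply sle_refl.
    + rewrite Hb. apply sle_refl.
  - intros a b. apply pred_ext. intro x. split.
    + intro H. split.
      * exact (filter_up x _ _ (sle_meet_l A a b) H).
      * exact (filter_up x _ _ (sle_meet_r A a b) H).
    + intros [Ha Hb]. apply filter_meet; assumption.
  - apply pred_ext. intro x. split; [tauto | intros _; apply filter_top].
  - intro a. apply pred_ext. intro x. unfold dia_plus. split.
    + intro Hx.
      assert (Htop : fmem x (sdia A (stop A)))
        by (eapply filter_up; [apply sdia_mono, sle_top | exact Hx]).
      exists (dia_preimage x Htop). simpl. split; [exact Hx|]. split; [exact Htop|].
      intro b. reflexivity.
    + intros [y [Hy [_ Hxy]]]. apply Hxy, Hy.
Qed.

End FilterFrame.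

Lemma complex_fun : complex [i_fun].
Proof.
  intros A HA.
  assert (Hfun := slo_valid_fun A (HA i_fun (SPi_axiom [i_fun] i_fun (or_introl eq_refl)))).
  exists (filter_frame A). split.
  - apply frame_validates_SPi. intros j [<- | []].
    apply frame_valid_fun_iff, filter_rel_partial_function.
  - apply filter_frame_embedding, Hfun.
Qed.

Lemma incomplete_of_refuting_slo (S : list spi) (i : spi) (A : SLO) :
  (forall F, frame_validates F (fun j => In j S) -> frame_valid F i) ->
  slo_validates A (fun j => In j S) -> ~ slo_valid A i -> incomplete S.
Proof. intros Hfr HA Hnot Hc. apply Hnot, (proj2 (Hc i) Hfr), HA. Qed.

Definition Btop : SLO := {|
  car := bool;
  smeet := andb;
  stop := true;
  sdia := fun _ => true;
  smeet_assoc := andb_assoc;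
  smeet_comm := andb_comm;
  smeet_idem := andb_diag;
  smeet_top := andb_true_r;
  sdia_mono := fun _ _ _ => eq_refl
|}.

Lemma Btop_valid_dia (s t : spf) : slo_valid Btop (s, SDia t).
Proof. intro v. apply andb_true_r. Qed.

Lemma Btop_not_valid_diaT : ~ slo_valid Btop i_diaT.
Proof. intro H. discriminate (H (fun _ => false)). Qed.

Inductive chain3 : Type := Bot | Mid | Top.

Definition chain3_meet (a b : chain3) : chain3 :=
  match a, b with
  | Top, x | x, Top => x
  | Mid, Mid => Mid
  | _, _ => Bot
  end.

Definition Chain3 : SLO := {|
  car := chain3;
  smeet := chain3_meet;
  stop := Top;
  sdia := fun a => match a with Top => Top | _ => Bot end;
  smeet_assoc := ltac:(intros [] [] []; reflexivity);
  smeet_comm := ltac:(intros [] []; reflexivity);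
  smeet_idem := ltac:(intros []; reflexivity);
  smeet_top := ltac:(intros []; reflexivity);
  sdia_mono := ltac:(intros [] []; simpl; congruence)
|}.

Lemma Chain3_validates_diaT_fun : slo_validates Chain3 (fun j => In j [i_diaT; i_fun]).
Proof.
  intros j [<- | [<- | []]]; intro v; unfold sle; simpl;
    destruct (v 0), (v 1); reflexivity.
Qed.

Lemma Chain3_not_valid_serialT : ~ slo_valid Chain3 i_serialT.
Proof. intro H. discriminate (H (fun _ => Mid)). Qed.

Lemma incomplete_diaT_fun : incomplete [i_diaT; i_fun].
Proof.
  apply (incomplete_of_refuting_slo _ i_serialT Chain3).
  - intros F HF. apply diaT_frame_valid_serialT, HF. left; reflexivity.
  - exact Chain3_validates_diaT_fun.
  - exact Chain3_not_valid_serialT.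
Qed.

Lemma incomplete_refl_fun : incomplete [i_refl; i_fun].
Proof.
  apply (incomplete_of_refuting_slo _ i_diaT Btop).
  - intros F HF. apply refl_fun_frame_valid_diaT; apply HF; simpl; tauto.
  - intros j [<- | [<- | []]]; apply Btop_valid_dia.
  - exact Btop_not_valid_diaT.
Qed.

Lemma incomplete_refl_trans_fun : incomplete [i_refl; i_trans; i_fun].
Proof.
  apply (incomplete_of_refuting_slo _ i_diaT Btop).
  - intros F HF. apply refl_fun_frame_valid_diaT; apply HF; simpl; tauto.
  - intros j [<- | [<- | [<- | []]]]; apply Btop_valid_dia.
  - exact Btop_not_valid_diaT.
Qed.

Lemma incomplete_sym_fun : incomplete [i_sym; i_fun].
Proof.
  apply (incomplete_of_refuting_slo _ i_diadiaT Btop).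
  - intros F HF. apply sym_fun_frame_valid_diadiaT; apply HF; simpl; tauto.
  - intros j [<- | [<- | []]]; apply Btop_valid_dia.
  - intro H. discriminate (H (fun _ => false)).
Qed.

Lemma refl_fun_add_derivable (S1 S2 : list spi) (x : spi) :
  (forall A : SLO, (forall a : A, sle A a (sdia A a)) ->
     (forall a b : A, sle A (smeet A (sdia A a) (sdia A b)) (sdia A (smeet A a b))) ->
     slo_valid A x) ->
  In i_refl S1 -> In i_fun S1 -> incl S1 S2 -> incl S2 (x :: S1) ->
  same_logic S1 S2.
Proof.
  intros Hx Hrefl Hfun H12 H21. apply (same_logic_add_derivable S1 S2 x H12 H21).
  intros A HA. apply Hx; [apply slo_valid_refl, HA, Hrefl | apply slo_valid_fun, HA, Hfun].
Qed.

Theorem theorem5p20 :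
  (complex [i_fun] /\ complete [i_fun]) /\
  incomplete [i_diaT; i_fun] /\
  (same_logic [i_refl; i_fun] [i_refl; i_eucl; i_fun] /\ incomplete [i_refl; i_fun]) /\
  (same_logic [i_refl; i_trans; i_fun] [i_refl; i_trans; i_sym; i_fun] /\
   same_logic [i_refl; i_trans; i_fun] [i_refl; i_trans; i_eucl; i_fun] /\
   incomplete [i_refl; i_trans; i_fun]) /\
  incomplete [i_sym; i_fun].
Proof.
  refine (conj (conj complex_fun (complete_of_complex _ complex_fun))
           (conj incomplete_diaT_fun
           (conj (conj _ incomplete_refl_fun)
           (conj (conj _ (conj _ incomplete_refl_trans_fun)) incomplete_sym_fun)))).
  - apply (refl_fun_add_derivable _ _ _ slo_valid_eucl_of_refl_fun);
      unfold incl; simpl; tauto.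
  - apply (refl_fun_add_derivable _ _ _ slo_valid_sym_of_refl_fun);
      unfold incl; simpl; tauto.
  - apply (refl_fun_add_derivable _ _ _ slo_valid_eucl_of_refl_fun);
      unfold incl; simpl; tauto.
Qed.
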